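(* Let $\mathcal A$ be a finite non-associative algebra. Then $\mathcal A$ has a qualitative representation if and only if there is a consistent atomic network $(N,\lambda)$ over $\mathcal A$ such that for every triple of atoms $(a,b,c)$ of $\mathcal A$ with $a;b\ge c$ there are nodes $x,y,z\in N$ with $\lambda(x,y)=a$, $\lambda(y,z)=b$ and $\lambda(x,z)=c$.
   Context: A non-associative algebra is an algebra $(A,0,1,+,-,1',\breve{\ },;)$ such that $(A,0,1,+,-)$ is a boolean algebra (with $x\cdot y=-(-x+-y)$ and $x\le y\iff x+y=y$); $1';x=x=x;1'$, $\breve{\breve x}=x$, $(x;y)\breve{}=\breve y;\breve x$; $\breve 0=x;0=0$, $(x+y)\breve{}=\breve x+\breve y$, $x;(y+z)=x;y+x;z$; and the Peircean law holds: $x;y\cdot\breve z=0$ iff $y;z\cdot\breve x=0$. An atom is a minimal nonzero element. A qualitative representation of $\mathcal A$ over base $D$ is an injective map $\phi:A\to\wp(D\times D)$ such that $0^\phi=\varnothing$, $1^\phi=D\times D$, $(1')^\phi=\{(x,x):x\in D\}$, $(a+b)^\phi=a^\phi\cup b^\phi$, $(-a)^\phi=(D\times D)\setminus a^\phi$, $(\breve a)^\phi=\{(y,x):(x,y)\in a^\phi\}$, and for all $a,b,c\in A$: $c^\phi\supseteq a^\phi\circ b^\phi\iff c\ge a;b$ (where $r\circ s$ is relational composition). A network over $\mathcal A$ is a pair $(N,\lambda)$ with $N$ a finite set and $\lambda:N\times N\to A$. It is consistent if for all $x,y,z\in N$: $\lambda(x,x)\le 1'$; $\lambda(x,y);\lambda(y,z)\cdot\lambda(x,z)\ne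 0$; $\lambda(x,y)\cdot\lambda(y,x)\breve{}\ne0$; $\lambda(x,y)\ne 0$. It is atomic if every $\lambda(x,y)$ is an atom. *)

(* A finite boolean algebra is a finite complemented
   distributive lattice with top and bottom (finCTBDistrLatticeType):
   0 = \bot, 1 = \top, x + y = x `|` y, -x = ~` x, x . y = x `&` y,
   x <= y is the lattice order. *)
From HB Require Import structures.
From mathcomp Require Import all_boot all_order.
Set Implicit Arguments. Unset Strict Implicit. Unset Printing Implicit Defensive.
Import Order.Theory.
Local Open Scope order_scope.

(* The non-boolean part of a non-associative algebra on a boolean algebra A. *)
Record NAlg (d : Order.disp_t) (A : finCTBDistrLatticeType d) := NAlgMk {
  nid : A;
  ncv : A -> A;
  ncomp : A -> A -> A;
  ax_idl : forall x, ncomp nid x = x;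
  ax_idr : forall x, ncomp x nid = x;
  ax_cvcv : forall x, ncv (ncv x) = x;
  ax_cvcomp : forall x y, ncv (ncomp x y) = ncomp (ncv y) (ncv x);
  ax_cv0 : ncv \bot = \bot;
  ax_comp0 : forall x, ncomp x \bot = \bot;
  ax_cvD : forall x y, ncv (x `|` y) = ncv x `|` ncv y;
  ax_compD : forall x y z, ncomp x (y `|` z) = ncomp x y `|` ncomp x z;
  ax_peirce : forall x y z,
    (ncomp x y `&` ncv z = \bot) <-> (ncomp y z `&` ncv x = \bot)
}.

Section Defs.
Context (d : Order.disp_t) (A : finCTBDistrLatticeType d) (S : NAlg A).

Definition is_atom (a : A) : Prop :=
  a <> \bot /\ forall b : A, b <= a -> b <> \bot -> b = a.

Definition rcomp (D : Type) (r s : D -> D -> Prop) : D -> D -> Prop :=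
  fun x z => exists y, r x y /\ s y z.

Definition is_qrep (D : Type) (phi : A -> D -> D -> Prop) : Prop :=
  injective phi /\
  (forall x y, ~ phi \bot x y) /\
  (forall x y, phi \top x y) /\
  (forall x y, phi (nid S) x y <-> x = y) /\
  (forall a b x y, phi (a `|` b) x y <-> (phi a x y \/ phi b x y)) /\
  (forall a x y, phi (~` a) x y <-> ~ phi a x y) /\
  (forall a x y, phi (ncv S a) x y <-> phi a y x) /\
  (forall a b c,
     (forall x y, rcomp (phi a) (phi b) x y -> phi c x y)
     <-> ncomp S a b <= c).

Definition has_qrep : Prop :=
  exists (D : Type) (phi : A -> D -> D -> Prop), is_qrep phi.

Definition consistent_net (N : finType) (lam : N -> N -> A) : Prop :=
  forall x y z : N,
    [/\ lam x x <= nid S,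
        ncomp S (lam x y) (lam y z) `&` lam x z <> \bot,
        lam x y `&` ncv S (lam y x) <> \bot &
        lam x y <> \bot].

Definition atomic_net (N : finType) (lam : N -> N -> A) : Prop :=
  forall x y : N, is_atom (lam x y).

End Defs.

From HB Require Import structures.
From mathcomp Require Import all_boot all_order.
From Stdlib Require Import Classical ClassicalEpsilon.
Import Order.Theory.
Local Open Scope order_scope.

(* From a representation, choose for each of the finitely many triples of
   atoms with c <= a;b three points realizing it; labelling every pair of
   chosen points by the unique atom containing it gives the network.
   Conversely, given the network, take the nodes modulo the equivalence
   lambda(x,y) <= 1' as base and relate x to z by a iff lambda(x,z) <= a.
   Consistency makes composition sound; the triangle condition, applied to
   an atom below a;b . -c, makes it complete (and the map injective). *)

Section Atoms.
Context {d : Order.disp_t} {A : finCTBDistrLatticeType d}.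
Implicit Types a b c e g p q x y : A.

Lemma le_compl_eq0 {x y} : x <= y -> x <= ~` y -> x = \bot.
Proof. by move=> xy xCy; apply/eqP; rewrite -lex0 -(meetxC y) lexI xy. Qed.

Lemma atom_meet a b : is_atom a -> a `&` b = \bot \/ a <= b.
Proof.
move=> [_ a_min]; have [->|ab0] := eqVneq (a `&` b) \bot; first by left.
by right; rewrite -leIidl (a_min _ (leIl a b) (elimN eqP ab0)).
Qed.

Lemma atom_le_or_le_compl a b : is_atom a -> a <= b \/ a <= ~` b.
Proof. by move=> /(atom_meet _ b) [/eqP|]; [rewrite disj_leC; right | left]. Qed.

Lemma atom_le_eq {a b} : is_atom a -> is_atom b -> a <= b -> a = b.
Proof. by move=> [a0 _] [_ b_min] ab; apply: b_min. Qed.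

Lemma atoms_eq {a b} : is_atom a -> is_atom b -> a `&` b <> \bot -> a = b.
Proof. by move=> ha hb ab0; case: (atom_meet _ b ha) => // /(atom_le_eq ha hb). Qed.

Lemma atom_le_join {a p q} : is_atom a -> a <= p `|` q -> a <= p \/ a <= q.
Proof.
move=> ha apq; case: (atom_meet _ p ha) => ap; last by left.
case: (atom_meet _ q ha) => aq; last by right.
by case: ha => a0 _; exfalso; apply: a0; rewrite -(meet_l apq) meetUr ap aq joinx0.
Qed.

Definition atomb a : bool :=
  (a != \bot) && [forall b, (b <= a) ==> (b != \bot) ==> (b == a)].

Lemma atomP a : reflect (is_atom a) (atomb a).
Proof.
apply: (iffP andP) => [[/eqP a0 /forallP a_min]|[a0 a_min]]; split => //.
- by move=> b ba /eqP b0; apply/eqP; move: (a_min b); rewrite ba b0.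
- exact/eqP.
- by apply/forallP => b; apply/implyP => ba; apply/implyP => /eqP/(a_min b ba)->.
Qed.

Lemma card_lt_below {x y} :
  x < y -> (#|[pred z : A | (z < x)%O]| < #|[pred z : A | (z < y)%O]|)%N.
Proof.
move=> xy; apply/proper_card/properP; split.
- by apply/subsetP => z; rewrite !inE => /lt_trans; apply.
- by exists x; rewrite !inE ?ltxx.
Qed.

Lemma nonatom_split {e} :
  e != \bot -> ~~ atomb e -> exists p q, [/\ p < e, q < e & p `|` q = e].
Proof.
rewrite /atomb => -> /= /forallPn [b]; rewrite !negb_imply => /and3P [be b0 nbe].
exists b, (e `&` ~` b); split; first by rewrite lt_neqAle nbe be.
- rewrite lt_neqAle leIl andbT; apply: contra b0 => /eqP eb.
  by apply/eqP/(le_compl_eq0 (le_refl b)); apply: le_trans be _; rewrite -eb leIr.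
- by rewrite joinIr joinxC meetx1 (join_r be).
Qed.

Lemma atom_below (Q : A -> Prop) :
  ~ Q \bot -> (forall p q, Q (p `|` q) -> Q p \/ Q q) ->
  forall e, Q e -> exists a, [/\ is_atom a, a <= e & Q a].
Proof.
move=> Q0 QU e; have [n] := ubnP #|[pred x : A | x < e]|.
elim: n e => // n IH e /ltnSE below_e Qe.
have e0 : e != \bot by apply: contraPneq Qe => ->.
have [/atomP ae|nae] := boolP (atomb e); first by exists e.
have [p [q [pe qe epq]]] := nonatom_split e0 nae.
have IHlt f : f < e -> Q f -> exists a, [/\ is_atom a, a <= e & Q a].
  move=> fe /(IH f (leq_trans (card_lt_below fe) below_e)) [a [ha af Qa]].
  by exists a; split => //; apply: le_trans af (ltW fe).
by rewrite -epq in Qe; case: (QU _ _ Qe); [exact: IHlt pe | exact: IHlt qe].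
Qed.

Lemma atom_le_meet_compl a c :
  ~~ (a <= c) -> exists g, [/\ is_atom g, g <= a & g <= ~` c].
Proof.
move=> nac; have QU p q : p `|` q <> \bot -> p <> \bot \/ q <> \bot.
  move=> pq0; apply: NNPP => /not_or_and [/NNPP p0 /NNPP q0].
  by apply: pq0; rewrite p0 q0 joinx0.
have ac0 : a `&` ~` c <> \bot.
  by move=> /eqP; rewrite disj_leC complK => ac; rewrite ac in nac.
have [g [hg gac _]] := atom_below (fun y => y <> \bot) (@^~ erefl) QU _ ac0.
by exists g; rewrite !(le_trans gac) ?leIl ?leIr.
Qed.

End Atoms.

Section Algebra.
Context {d : Order.disp_t} {A : finCTBDistrLatticeType d} (S : NAlg A).
Implicit Types a b g p q x y : A.

Lemma ncompDl p q y : ncomp S (p `|` q) y = ncomp S p y `|` ncomp S q y.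
Proof.
by rewrite -[LHS](ax_cvcv S) ax_cvcomp ax_cvD ax_compD ax_cvD !ax_cvcomp !ax_cvcv.
Qed.

Lemma ncomp0l y : ncomp S \bot y = \bot.
Proof. by rewrite -[LHS](ax_cvcv S) ax_cvcomp ax_cv0 ax_comp0 ax_cv0. Qed.

Lemma ncomp_monol y {x x'} : x <= x' -> ncomp S x y <= ncomp S x' y.
Proof. by move=> /join_idPr <-; rewrite ncompDl leUl. Qed.

Lemma ncomp_monor x {y y'} : y <= y' -> ncomp S x y <= ncomp S x y'.
Proof. by move=> /join_idPr <-; rewrite ax_compD leUl. Qed.

Lemma ncv_mono {x y} : x <= y -> ncv S x <= ncv S y.
Proof. by move=> /join_idPr <-; rewrite ax_cvD leUl. Qed.

Lemma atom_le_ncomp {g a b} : is_atom g -> g <= ncomp S a b ->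
  exists a' b', [/\ is_atom a', is_atom b', a' <= a, b' <= b & g <= ncomp S a' b'].
Proof.
move=> hg gab; have g0 : ~ g <= \bot by rewrite lex0 => /eqP; case: hg.
have [a' [ha' a'a ga']] : exists a', [/\ is_atom a', a' <= a & g <= ncomp S a' b].
  apply: (atom_below (fun y => g <= ncomp S y b)) gab => [|p q] /=.
    by rewrite ncomp0l.
  by rewrite ncompDl => /(atom_le_join hg).
have [b' [hb' b'b gb']] : exists b', [/\ is_atom b', b' <= b & g <= ncomp S a' b'].
  apply: (atom_below (fun y => g <= ncomp S a' y)) ga' => [|p q] /=.
    by rewrite ax_comp0.
  by rewrite ax_compD => /(atom_le_join hg).
by exists a', b'.
Qed.

End Algebra.

Section NetworkRepresentation.
Context {d : Order.disp_t} {A : finCTBDistrLatticeType d} (S : NAlg A).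
Context (N : finType) (lam : N -> N -> A).
Hypotheses (lam_consistent : consistent_net S lam) (lam_atomic : atomic_net lam).
Hypothesis lam_triangles : forall a b c : A, is_atom a -> is_atom b -> is_atom c ->
  c <= ncomp S a b -> exists x y z : N, [/\ lam x y = a, lam y z = b & lam x z = c].

Lemma lam_diag x : lam x x <= nid S.
Proof. by have [] := lam_consistent x x x. Qed.

Lemma lam_ncomp x y z c : ncomp S (lam x y) (lam y z) <= c -> lam x z <= c.
Proof.
move=> le_c; have [_ meet0 _ _] := lam_consistent x y z.
case: (atom_meet _ c (lam_atomic x z)) => // xz0; case: meet0.
by apply/eqP; rewrite -lex0 -xz0 meetC leI2.
Qed.

Lemma lam_cv x y : lam x y = ncv S (lam y x).
Proof.
have le_cv u v : lam u v <= ncv S (lam v u).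
  have [_ _ uv0 _] := lam_consistent u v u.
  by case: (atom_meet _ (ncv S (lam v u)) (lam_atomic u v)).
by apply: le_anti; rewrite le_cv -[X in _ <= X](ax_cvcv S) ncv_mono.
Qed.

Lemma lam_nid_l {x y} z : lam x y <= nid S -> lam x z = lam y z.
Proof.
move=> /(ncomp_monol S (lam y z)); rewrite ax_idl => /lam_ncomp.
exact: atom_le_eq.
Qed.

Lemma lam_nid_r x {y z} : lam y z <= nid S -> lam x z = lam x y.
Proof.
move=> /(ncomp_monor S (lam x y)); rewrite ax_idr => /lam_ncomp.
exact: atom_le_eq.
Qed.

Lemma lam_surj {g} : is_atom g -> exists x z, lam x z = g.
Proof.
(* g = g;1', so g is the third side of a triangle (g, e, g) for some atom e. *)
move=> hg; have gg1 : g <= ncomp S g (nid S) by rewrite ax_idr.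
have [a [e [ha he ag _ gae]]] := atom_le_ncomp S hg gg1.
rewrite (atom_le_eq ha hg ag) in gae.
by have [x [y [z [_ _ <-]]]] := lam_triangles _ _ _ hg he hg gae; exists x, z.
Qed.

Definition canon x : N := odflt x [pick y | lam x y <= nid S].

Lemma canon_nid x : lam x (canon x) <= nid S.
Proof. by rewrite /canon; case: pickP => //= _; apply: lam_diag. Qed.

Lemma canon_eq {x x'} : lam x x' <= nid S -> canon x = canon x'.
Proof.
move=> xx'; rewrite /canon (@eq_pick _ _ (fun y => lam x' y <= nid S)).
  by case: pickP => [//|/(_ x')]; rewrite lam_diag.
by move=> y; rewrite /= (lam_nid_l y xx').
Qed.

Lemma lam_canon x y : lam (canon x) (canon y) = lam x y.
Proof. by rewrite -(lam_nid_l _ (canon_nid x)) (lam_nid_r _ (canon_nid y)). Qed.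

Definition net_base := {x : N | canon x == x}.

Definition net_class x : net_base :=
  exist _ (canon x) (introT eqP (esym (canon_eq (canon_nid x)))).

Definition net_rel (a : A) (u v : net_base) : Prop := lam (val u) (val v) <= a.

Lemma net_rel_class a x z : net_rel a (net_class x) (net_class z) = (lam x z <= a).
Proof. by rewrite /net_rel /= lam_canon. Qed.

Lemma not_net_rel_atom_compl {g c x z} :
  is_atom g -> g <= ~` c -> lam x z = g -> ~ net_rel c (net_class x) (net_class z).
Proof.
move=> [g0 _] gc xz; rewrite net_rel_class xz => ge.
by apply: g0; apply: le_compl_eq0 ge gc.
Qed.

Lemma net_rel_inj : injective net_rel.
Proof.
suff le_rel a b : net_rel a = net_rel b -> a <= b.
  by move=> a b E; apply: le_anti; rewrite !le_rel.
move=> E; apply: contraT => /atom_le_meet_compl [g [hg ga gb]].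
have [x [z xz]] := lam_surj hg; exfalso; apply: (not_net_rel_atom_compl hg gb xz).
by rewrite -E net_rel_class xz.
Qed.

Lemma net_rel0 u v : ~ net_rel \bot u v.
Proof. by rewrite /net_rel lex0 => /eqP; case: (lam_atomic (val u) (val v)). Qed.

Lemma net_relT u v : net_rel \top u v.
Proof. exact: lex1. Qed.

Lemma net_rel_nid u v : net_rel (nid S) u v <-> u = v.
Proof.
split=> [uv|-> ]; last exact: lam_diag.
by apply: val_inj; rewrite -(eqP (valP u)) -(eqP (valP v)); apply: canon_eq.
Qed.

Lemma net_relU a b u v : net_rel (a `|` b) u v <-> net_rel a u v \/ net_rel b u v.
Proof.
split; first exact: atom_le_join (lam_atomic _ _).
by case=> /le_trans; apply; rewrite ?leUl ?leUr.
Qed.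

Lemma net_relC a u v : net_rel (~` a) u v <-> ~ net_rel a u v.
Proof.
split=> [uCa ua|nua].
  by case: (lam_atomic (val u) (val v)) => uv0 _; apply/uv0/(le_compl_eq0 ua).
by case: (atom_le_or_le_compl _ a (lam_atomic (val u) (val v))).
Qed.

Lemma net_relV a u v : net_rel (ncv S a) u v <-> net_rel a v u.
Proof.
rewrite /net_rel lam_cv; split; last exact: ncv_mono.
by move/(ncv_mono S); rewrite !ax_cvcv.
Qed.

Lemma net_rel_comp a b c :
  (forall u w, rcomp (net_rel a) (net_rel b) u w -> net_rel c u w)
  <-> ncomp S a b <= c.
Proof.
split=> [sub|abc u w [v [uv vw]]]; last first.
  apply: lam_ncomp (le_trans _ abc).
  exact: le_trans (ncomp_monol S _ uv) (ncomp_monor S _ vw).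
apply: contraT => /atom_le_meet_compl [g [hg gab gc]].
have [a' [b' [ha' hb' a'a b'b gab']]] := atom_le_ncomp S hg gab.
have [x [y [z [xy yz xz]]]] := lam_triangles _ _ _ ha' hb' hg gab'.
exfalso; apply: (not_net_rel_atom_compl hg gc xz); apply: sub; exists (net_class y).
by rewrite !net_rel_class xy yz.
Qed.

Lemma net_qrep : is_qrep S net_rel.
Proof.
exact: conj net_rel_inj (conj net_rel0 (conj net_relT (conj net_rel_nid
  (conj net_relU (conj net_relC (conj net_relV net_rel_comp)))))).
Qed.

End NetworkRepresentation.
Section RepresentationNetwork.
Context {d : Order.disp_t} {A : finCTBDistrLatticeType d} (S : NAlg A).
Context (D : Type) (phi : A -> D -> D -> Prop).
Hypothesis phi_qrep : is_qrep S phi.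
Implicit Types (a b c : A) (x y z : D).

Lemma rep0 x y : ~ phi \bot x y.
Proof. by case: phi_qrep => _ [? _]. Qed.

Lemma repT x y : phi \top x y.
Proof. by case: phi_qrep => _ [_ [? _]]. Qed.

Lemma rep_nid x y : phi (nid S) x y <-> x = y.
Proof. by case: phi_qrep => _ [_ [_ [? _]]]. Qed.

Lemma repU a b x y : phi (a `|` b) x y <-> phi a x y \/ phi b x y.
Proof. by case: phi_qrep => _ [_ [_ [_ [? _]]]]. Qed.

Lemma repC a x y : phi (~` a) x y <-> ~ phi a x y.
Proof. by case: phi_qrep => _ [_ [_ [_ [_ [? _]]]]]. Qed.

Lemma repV a x y : phi (ncv S a) x y <-> phi a y x.
Proof. by case: phi_qrep => _ [_ [_ [_ [_ [_ [? _]]]]]]. Qed.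

Lemma rep_comp a b c :
  (forall x z, rcomp (phi a) (phi b) x z -> phi c x z) <-> ncomp S a b <= c.
Proof. by case: phi_qrep => _ [_ [_ [_ [_ [_ [_ ?]]]]]]. Qed.

Lemma rep_mono a b x y : a <= b -> phi a x y -> phi b x y.
Proof. by move=> /join_idPr <- ?; apply/repU; left. Qed.

Lemma repI a b x y : phi a x y -> phi b x y -> phi (a `&` b) x y.
Proof.
move=> ha hb; rewrite -[_ `&` _]complK complI; apply/repC => /repU.
by case=> /repC.
Qed.

Lemma rep_atom x y : exists a, is_atom a /\ phi a x y.
Proof.
have [a [ha _ xy]] := atom_below (fun e => phi e x y) (@rep0 x y)
  (fun p q => proj1 (repU p q x y)) _ (repT x y).
by exists a.
Qed.

Lemma rep_atom_uniq a b x y :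
  is_atom a -> is_atom b -> phi a x y -> phi b x y -> a = b.
Proof.
move=> ha hb xa xb; apply: atoms_eq ha hb _ => ab0.
by apply: (@rep0 x y); rewrite -ab0; apply: repI.
Qed.

Definition label x y : A :=
  proj1_sig (constructive_indefinite_description _ (rep_atom x y)).

Lemma labelP x y : is_atom (label x y) /\ phi (label x y) x y.
Proof. exact: proj2_sig (constructive_indefinite_description _ (rep_atom x y)). Qed.

Lemma label_eq a x y : is_atom a -> phi a x y -> label x y = a.
Proof. by move=> ha xa; have [hl xl] := labelP x y; apply: rep_atom_uniq hl ha xl xa. Qed.

Lemma label_diag x : label x x <= nid S.
Proof.
have [hl xl] := labelP x x.
case: (atom_le_or_le_compl _ (nid S) hl) => // /rep_mono/(_ xl)/repC.
by case; apply/rep_nid.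
Qed.

Lemma label_comp x y z : ncomp S (label x y) (label y z) `&` label x z <> \bot.
Proof.
move=> /eqP; rewrite disj_leC => /rep_comp/(_ x z) sub.
apply: (proj1 (repC _ x z) _ (labelP x z).2); apply: sub.
by exists y; split; [exact: (labelP x y).2 | exact: (labelP y z).2].
Qed.

Lemma label_cv x y : label x y `&` ncv S (label y x) <> \bot.
Proof.
move=> xy0; apply: (@rep0 x y); rewrite -xy0; apply: repI; first exact: (labelP x y).2.
by apply/repV; exact: (labelP y x).2.
Qed.

Lemma rep_triangle a b c : is_atom c -> c <= ncomp S a b ->
  exists p : D * D * D, [/\ phi a p.1.1 p.1.2, phi b p.1.2 p.2 & phi c p.1.1 p.2].
Proof.
move=> [c0 _] cab; apply: NNPP => no_p; apply: c0.
have abc : ncomp S a b <= ~` c.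
  by apply/rep_comp => x z [y [xy yz]]; apply/repC => xz; apply: no_p; exists (x, y, z).
exact: le_compl_eq0 (le_refl c) (le_trans cab abc).
Qed.

Definition atom_triple (t : A * A * A) : bool :=
  [&& atomb t.1.1, atomb t.1.2, atomb t.2 & t.2 <= ncomp S t.1.1 t.1.2].

Definition atom_triangle := {t : A * A * A | atom_triple t}.

Lemma atom_triangle_realized (t : atom_triangle) :
  exists p : D * D * D, [/\ phi (val t).1.1 p.1.1 p.1.2,
    phi (val t).1.2 p.1.2 p.2 & phi (val t).2 p.1.1 p.2].
Proof.
by case: t => [[[a b] c]] /= /and4P [_ _ /atomP hc cab]; apply: rep_triangle.
Qed.

Definition triangle_points (t : atom_triangle) : D * D * D :=
  proj1_sig (constructive_indefinite_description _ (atom_triangle_realized t)).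

Lemma triangle_pointsP t : let p := triangle_points t in
  [/\ phi (val t).1.1 p.1.1 p.1.2, phi (val t).1.2 p.1.2 p.2 & phi (val t).2 p.1.1 p.2].
Proof.
exact: proj2_sig (constructive_indefinite_description _ (atom_triangle_realized t)).
Qed.

Definition node_point (n : atom_triangle * 'I_3) : D :=
  let p := triangle_points n.1 in nth p.1.1 [:: p.1.1; p.1.2; p.2] n.2.

Lemma rep_net : exists (N : finType) (lam : N -> N -> A),
  [/\ consistent_net S lam, atomic_net lam &
      forall a b c : A, is_atom a -> is_atom b -> is_atom c ->
        c <= ncomp S a b ->
        exists x y z : N, [/\ lam x y = a, lam y z = b & lam x z = c]].
Proof.
exists (atom_triangle * 'I_3)%type, (fun n m => label (node_point n) (node_point m)).
split=> [n m k|n m|a b c ha hb hc cab]; first split.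
- exact: label_diag.
- exact: label_comp.
- exact: label_cv.
- by case: (labelP (node_point n) (node_point m)) => [[]].
- exact: (labelP _ _).1.
have abc : atom_triple (a, b, c) by apply/and4P; split => //; apply/atomP.
pose t : atom_triangle := exist _ (a, b, c) abc.
have [xy yz xz] := triangle_pointsP t.
exists (t, Ordinal (isT : (0 < 3)%N)), (t, Ordinal (isT : (1 < 3)%N)),
  (t, Ordinal (isT : (2 < 3)%N)).
by split; apply: label_eq.
Qed.

End RepresentationNetwork.

Theorem mainTheorem5 (d : Order.disp_t) (A : finCTBDistrLatticeType d)
    (S : NAlg A) :
  has_qrep S <->
  exists (N : finType) (lam : N -> N -> A),
    [/\ consistent_net S lam, atomic_net lam &
        forall a b c : A, is_atom a -> is_atom b -> is_atom c ->
          c <= ncomp S a b ->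
          exists x y z : N, [/\ lam x y = a, lam y z = b & lam x z = c]].
Proof.
split=> [[D [phi phi_qrep]] | [N [lam [lam_consistent lam_atomic lam_triangles]]]].
- exact: rep_net phi_qrep.
- by eexists; eexists; exact: net_qrep lam_consistent lam_atomic lam_triangles.
Qed.
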